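(* Let $n\ge 3$, $k\ge 1$, and let $T_1,\dots,T_k$ be independent uniformly random spanning trees of the complete graph $K_n$. For an edge $e$ of $K_n$ let $X_e^{T_i}$ be the indicator of $e\in E(T_i)$ and \[R_e=\sum_{i=1}^k X_e^{T_i}-\max\left(X_e^{T_1},\dots,X_e^{T_k}\right).\] Let $e\ne e'$ be edges of $K_n$. Then \begin{itemize} \item if $e$ and $e'$ share no endpoint, $\mathrm{Cov}(R_e,R_{e'})=0$; \item if $e$ and $e'$ share an endpoint, \[\mathrm{Cov}(R_e,R_{e'})=-\frac{k}{n^2}+\frac{2k}{n^2}\left(1-\frac{2}{n}\right)^{k-1}+\left(1-\frac{4}{n}+\frac{3}{n^2}\right)^k-\left(1-\frac{2}{n}\right)^{2k}.\] \end{itemize}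
   Context: Uniform random spanning tree: chosen from the uniform distribution on the $n^{n-2}$ labeled spanning trees of $K_n$ on vertex set $[n]$. $R_e$ is the number of repeated (surplus) occurrences of $e$ among the trees. *)

From mathcomp Require Import all_boot all_order all_algebra.
Set Implicit Arguments. Unset Strict Implicit. Unset Printing Implicit Defensive.
Import Order.TTheory GRing.Theory Num.Theory.

(* Vertices of K_n are 'I_n; an edge of K_n is a 2-element subset of 'I_n;
   a (spanning) subgraph is a set of edges. *)

Definition adj (n : nat) (F : {set {set 'I_n}}) : rel 'I_n :=
  fun x y => [set x; y] \in F.

(* F is a spanning tree of K_n: all its elements are edges of K_n, the graph
   ([n], F) is connected, and it is acyclic (no edge {x,y} of F lies on a cycle,
   i.e. x and y are not connected once that edge is removed). *)
Definition is_spanning_tree (n : nat) (F : {set {set 'I_n}}) : bool :=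
  [&& [forall f in F, #|f| == 2%N],
      [forall x, forall y, connect (adj F) x y] &
      [forall f in F, forall x, forall y,
         ((f == [set x; y]) && (x != y)) ==> ~~ connect (adj (F :\ f)) x y]].

(* The sample space: k-tuples (T_1,...,T_k) of spanning trees of K_n, with the
   uniform distribution (= independent uniform spanning trees). *)
Definition tree_tuples (n k : nat) : {set {ffun 'I_k -> {set {set 'I_n}}}} :=
  [set T : {ffun 'I_k -> {set {set 'I_n}}} | [forall i, is_spanning_tree (T i)]].

Definition Xind (n k : nat) (e : {set 'I_n}) (T : {ffun 'I_k -> {set {set 'I_n}}})
  (i : 'I_k) : nat := (e \in T i).

Definition Rsurplus (n k : nat) (e : {set 'I_n})
  (T : {ffun 'I_k -> {set {set 'I_n}}}) : nat :=
  (\sum_(i < k) Xind e T i - \max_(i < k) Xind e T i)%N.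

Local Open Scope ring_scope.

Definition Expect (R : realFieldType) (n k : nat)
  (f : {ffun 'I_k -> {set {set 'I_n}}} -> R) : R :=
  (\sum_(T in tree_tuples n k) f T) / (#|tree_tuples n k|)%:R.

Definition Cov (R : realFieldType) (n k : nat)
  (f g : {ffun 'I_k -> {set {set 'I_n}}} -> R) : R :=
  Expect (fun T => f T * g T) - Expect f * Expect g.

Definition Rr (R : realFieldType) (n k : nat) (e : {set 'I_n})
  (T : {ffun 'I_k -> {set {set 'I_n}}}) : R := (Rsurplus e T)%:R.

(* For an edge ab of a spanning tree T and a vertex u on a's side of T - ab,
   the graph T - ab + bu is again a spanning tree, and every spanning tree arises
   exactly once in this way: u is the neighbour of b on its path to a.  Counting
   the pairs (T, u) both ways and adding the two sides of ab gives
   n * #{T | ab in T} = 2 * #{T}; the same bijection, weighted by a second edge,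
   gives n^2 * #{T | e, e' in T} = 4 * #{T} for disjoint edges and 3 * #{T} for
   edges sharing a vertex.  So P(e in T) = 2/n and P(e, e' in T) = 4/n^2 or 3/n^2.
   Finally R_e = sum_i X_e^{T_i} - 1 + prod_i (1 - X_e^{T_i}), so Cov(R_e, R_e')
   expands into expectations of products over the independent trees T_i, which
   depend only on these two probabilities. *)

From mathcomp Require Import all_boot all_order all_algebra.
From mathcomp Require Import zify ring.
Import Order.TTheory GRing.Theory Num.Theory.
Set Implicit Arguments. Unset Strict Implicit. Unset Printing Implicit Defensive.

Local Notation linked F := (connect (adj F)).

Lemma connect_ind (T : finType) (e : rel T) (P : T -> Prop) x y :
  P x -> (forall v w, P v -> e v w -> P w) -> connect e x y -> P y.
Proof.
move=> Px step /connectP[p]; elim: p x Px => [|z p IHp] x Px /=; first by move=> _ ->.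
by case/andP=> exz pz lastz; apply: IHp (step _ _ Px exz) pz lastz.
Qed.

Section Pairs.
Variable T : finType.
Implicit Types (A : {set T}) (a b c d v w x y z : T).

Lemma set2C x y : [set x; y] = [set y; x].
Proof. by rewrite setUC. Qed.

Lemma eq_set2 x y v w :
  [set v; w] = [set x; y] -> (v = x /\ w = y) \/ (v = y /\ w = x).
Proof.
move=> E.
have /set2P vxy : v \in [set x; y] by rewrite -E set21.
have /set2P wxy : w \in [set x; y] by rewrite -E set22.
have /set2P xvw : x \in [set v; w] by rewrite E set21.
have /set2P yvw : y \in [set v; w] by rewrite E set22.
by case: vxy wxy xvw yvw => -> [] -> [] ? [] ?; subst; auto.
Qed.

Lemma set2_injr x y z : x != y -> [set x; y] = [set x; z] -> y = z.
Proof.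
move=> nxy E; have /set2P[] // : y \in [set x; z] by rewrite -E set22.
by move=> yx; rewrite yx eqxx in nxy.
Qed.

Lemma set2_neq_notin A x y : x \notin A -> A != [set x; y].
Proof. by apply: contraNneq => ->; rewrite set21. Qed.

Lemma notin_set2C a b c d :
  c \notin [set a; b] -> d \notin [set a; b] -> a \notin [set c; d].
Proof. by move=> cab dab; apply/set2P => -[] E; subst; rewrite set21 in cab dab. Qed.

Lemma setU1D1 A a b : a != b -> (a |: A) :\ b = a |: (A :\ b).
Proof.
move=> nab; apply/setP => x; rewrite !inE.
by have [->|/negbTE xa] := eqVneq x a; rewrite ?nab ?xa.
Qed.

Lemma set2_of_mem A v : #|A| = 2 -> v \in A -> exists2 u, u != v & A = [set u; v].
Proof.
move/eqP/cards2P => [x [y [nxy ->]]] /set2P[]->; last by exists x.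
by exists y; rewrite 1?eq_sym // set2C.
Qed.

End Pairs.

Section Connectivity.
Variable n : nat.
Local Notation graph := {set {set 'I_n}}.
Implicit Types (F : graph) (x y : 'I_n).

Lemma adj_sym F : symmetric (adj F).
Proof. by move=> x y; rewrite /adj set2C. Qed.

Lemma linked_sym F : connect_sym (adj F).
Proof. exact/sym_connect_sym/adj_sym. Qed.

Lemma linkedE F x y : linked F x y = (fingraph.root (adj F) x == fingraph.root (adj F) y).
Proof. by rewrite (root_connect (linked_sym F)). Qed.

Lemma linked_edge F x y : [set x; y] \in F -> linked F x y.
Proof. exact: connect1. Qed.

Lemma linked_sub F F' x y : F \subset F' -> linked F x y -> linked F' x y.
Proof.
by move=> sFF'; apply: connect_sub => u v uv; apply/connect1/(subsetP sFF').
Qed.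

End Connectivity.

(* Closes goals that follow from [linked F] being an equivalence relation:
   each [linked F x y] becomes an equality of component roots, the boolean
   structure is split, and congruence concludes. *)
Ltac by_roots :=
  repeat match goal with H : is_true _ |- _ => revert H end;
  rewrite ?linkedE; intros;
  try match goal with |- is_true (~~ _) => apply/negP; intro end;
  repeat match goal with
  | H : is_true (~~ (_ || _)) |- _ => rewrite negb_or in H
  | H : is_true (_ && _) |- _ => case/andP: H => ? ?
  | H : is_true (~~ (_ == _)) |- _ => move/eqP: H => H
  | H : is_true (_ == _) |- _ => move/eqP: H => H
  | H : is_true (~~ (_ && _)) |- _ => rewrite negb_and in H
  | H : is_true (_ || _) |- _ => case/orP: H => H; try solve [congruence]
  end;
  repeat match goal with |- context[?a == ?b] => case: (a =P b) => ? end;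
  simpl; try done; congruence.

Section Trees.
Variable n : nat.
Local Notation graph := {set {set 'I_n}}.
Implicit Types (G T : graph) (a b p q r s u v w x y z : 'I_n).

Lemma linked_setU1 G x y p q :
  linked ([set x; y] |: G) p q =
  [|| linked G p q, linked G p x && linked G y q | linked G p y && linked G x q].
Proof.
apply/idP/idP.
- apply: (connect_ind (P := fun v =>
    [|| linked G p v, linked G p x && linked G y v | linked G p y && linked G x v]));
    first by rewrite connect0.
  move=> v w Pv /setU1P[/eq_set2[[? ?]|[? ?]]|vw]; subst; try by_roots.
  by have := connect1 (vw : adj G v w); by_roots.
- have sub : G \subset [set x; y] |: G by apply/subsetP => f fG; rewrite setU1r.
  have xy : linked ([set x; y] |: G) x y by rewrite linked_edge ?setU11.
  have yx : linked ([set x; y] |: G) y x by rewrite linked_sym.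
  case/or3P => [|/andP[px yq]|/andP[py xq]]; first exact: linked_sub.
  + exact: connect_trans (linked_sub sub px) (connect_trans xy (linked_sub sub yq)).
  + exact: connect_trans (linked_sub sub py) (connect_trans yx (linked_sub sub xq)).
Qed.

Lemma tree_card_edge T f : is_spanning_tree T -> f \in T -> #|f| = 2.
Proof. by case/and3P => /forall_inP cardT _ _ /cardT/eqP. Qed.

Lemma tree_linked T x y : is_spanning_tree T -> linked T x y.
Proof. by case/and3P => _ /forallP/(_ x)/forallP/(_ y). Qed.

Lemma tree_bridge T x y : is_spanning_tree T -> [set x; y] \in T -> x != y ->
  ~~ linked (T :\ [set x; y]) x y.
Proof.
case/and3P => _ _ /forall_inP bridge xyT nxy.
by have /forallP/(_ x)/forallP/(_ y) := bridge _ xyT; rewrite eqxx nxy.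
Qed.

Lemma tree_intro T :
  (forall f, f \in T -> #|f| = 2) -> (forall x y, linked T x y) ->
  (forall x y, [set x; y] \in T -> x != y -> ~~ linked (T :\ [set x; y]) x y) ->
  is_spanning_tree T.
Proof.
move=> cardT conT bridgeT; apply/and3P; split.
- by apply/forall_inP => f /cardT ->.
- by apply/forallP => x; apply/forallP => y; apply: conT.
- apply/forall_inP => f fT; apply/forallP => x; apply/forallP => y.
  by apply/implyP => /andP[/eqP fxy nxy]; subst f; apply: bridgeT.
Qed.

Lemma tree_edge_neq T x y : is_spanning_tree T -> [set x; y] \in T -> x != y.
Proof. by move=> treeT /(tree_card_edge treeT); rewrite cards2; case: (x != y). Qed.

Lemma tree_sides T x y v : is_spanning_tree T -> [set x; y] \in T ->
  linked (T :\ [set x; y]) x v || linked (T :\ [set x; y]) y v.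
Proof.
move=> treeT xyT.
apply: (connect_ind (P := fun v =>
  linked (T :\ [set x; y]) x v || linked (T :\ [set x; y]) y v)) (tree_linked x v treeT).
  by rewrite connect0.
move=> u w Pu uwT; have [/eq_set2[[_ ->]|[_ ->]]|uw] := eqVneq [set u; w] [set x; y].
- by rewrite connect0 orbT.
- by rewrite connect0.
have : linked (T :\ [set x; y]) u w by rewrite linked_edge // !inE uw.
by by_roots.
Qed.

Lemma tree_exchange T x y p q : is_spanning_tree T -> [set x; y] \in T ->
  linked (T :\ [set x; y]) x p -> linked (T :\ [set x; y]) y q ->
  is_spanning_tree ([set p; q] |: (T :\ [set x; y])).
Proof.
move=> treeT xyT xp yq.
have nxy := tree_edge_neq treeT xyT.
have bridge := tree_bridge treeT xyT nxy.
have side u := tree_sides u treeT xyT.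
set f := [set x; y] in xyT xp yq bridge side *.
set G := T :\ f in xp yq bridge side *.
have npq : p != q by apply/eqP => pq; move: bridge xp yq; rewrite pq; by_roots.
have sub : G \subset [set p; q] |: G by apply/subsetP => g gG; rewrite setU1r.
apply: tree_intro.
- move=> g /setU1P[->|/setD1P[_ gT]]; first by rewrite cards2 npq.
  exact: tree_card_edge treeT gT.
- have xy : linked ([set p; q] |: G) x y.
    apply: connect_trans (linked_sub sub xp) (connect_trans (linked_edge (setU11 _ _)) _).
    by rewrite linked_sym (linked_sub sub yq).
  have x_all u : linked ([set p; q] |: G) x u.
    case/orP: (side u) => [|yu]; first exact: linked_sub.
    exact: connect_trans xy (linked_sub sub yu).
  by move=> u v; apply: connect_trans (x_all v); rewrite linked_sym.
- move=> s r srT nsr; have [E|nE] := eqVneq [set s; r] [set p; q].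
    have sub' : ([set p; q] |: G) :\ [set s; r] \subset G.
      by apply/subsetP => g; rewrite E !inE; case: eqP.
    apply/negP => /(linked_sub sub').
    by case/eq_set2: E => -[? ?]; subst; move: bridge xp yq; by_roots.
  have srG : [set s; r] \in G by move: srT; rewrite in_setU1 (negbTE nE).
  have /setD1P[srf srT'] := srG.
  have bridge' := tree_bridge treeT srT' nsr.
  set h := [set s; r] in nE srG srf srT' bridge' *.
  set H := G :\ h.
  have E1 : ([set p; q] |: G) :\ h = [set p; q] |: H by rewrite setU1D1 // eq_sym.
  have E2 : T :\ h = f |: H by rewrite -{1}(setD1K xyT) setU1D1 // eq_sym.
  have E3 : G = h |: H by rewrite /H setD1K.
  by move: bridge' bridge xp yq; rewrite E1 E2 E3 /h /f !linked_setU1; by_roots.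
Qed.

Lemma star_tree z : is_spanning_tree [set [set z; v] | v in [set v | v != z]].
Proof.
set S := [set [set z; v] | v in [set v | v != z]].
have zS v : v != z -> [set z; v] \in S by move=> vz; apply: imset_f; rewrite inE.
apply: tree_intro.
- by move=> f /imsetP[v]; rewrite inE => vz ->; rewrite cards2 eq_sym vz.
- have z_all v : linked S z v.
    by have [->|vz] := eqVneq v z; [exact: connect0 | exact/linked_edge/zS].
  by move=> x y; apply: connect_trans (z_all y); rewrite linked_sym.
- move=> x y /imsetP[v]; rewrite inE => vz xy_zv nxy.
  have isolated w : linked (S :\ [set z; v]) v w -> w = v.
    apply: (connect_ind (P := fun w => w = v)) => // _ w' -> {w}.
    rewrite /adj !inE => /andP[ne /imsetP[v']]; rewrite inE => v'z.
    case/eq_set2 => -[? ?]; subst; first by rewrite eqxx in vz.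
    by rewrite set2C eqxx in ne.
  rewrite xy_zv; apply/negP; case/esym/eq_set2: xy_zv => -[? ?]; subst.
    by rewrite linked_sym => /isolated xz; rewrite xz eqxx in vz.
  by move/isolated => yz; rewrite yz eqxx in vz.
Qed.

Lemma tree_first_edge T a b : is_spanning_tree T -> a != b ->
  exists u, [set b; u] \in T /\ linked (T :\ [set b; u]) u a.
Proof.
move=> treeT nab.
suff [ab|//] : a = b \/ exists u, [set b; u] \in T /\ linked (T :\ [set b; u]) u a.
  by rewrite ab eqxx in nab.
apply: (connect_ind (P := fun v =>
  v = b \/ exists u, [set b; u] \in T /\ linked (T :\ [set b; u]) u v))
  (tree_linked b a treeT); first by left.
move=> v w Pv vwT; have [->|wb] := eqVneq w b; first by left.
right; have [vb|vb] := eqVneq v b; first by exists w; rewrite -vb connect0.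
case: Pv => [/eqP|[u [buT uv]]]; first by rewrite (negbTE vb).
exists u; split => //; apply: connect_trans uv (linked_edge _).
rewrite !inE (vwT : [set v; w] \in T) andbT.
by apply/eqP => /eq_set2[[vb' _]|[_ wb']]; [rewrite vb' eqxx in vb | rewrite wb' eqxx in wb].
Qed.

Lemma tree_first_edge_uniq T a b u u' : is_spanning_tree T ->
  [set b; u] \in T -> linked (T :\ [set b; u]) u a ->
  [set b; u'] \in T -> linked (T :\ [set b; u']) u' a -> u = u'.
Proof.
move=> treeT buT ua bu'T u'a; have [//|nuu'] := eqVneq u u'.
have nbu := tree_edge_neq treeT buT; have nbu' := tree_edge_neq treeT bu'T.
have bridge := tree_bridge treeT buT nbu; have bridge' := tree_bridge treeT bu'T nbu'.
have ne : [set b; u] != [set b; u'].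
  by apply: contra_neq nuu' => /(set2_injr nbu).
set G := T :\ [set b; u] :\ [set b; u'].
have E : T :\ [set b; u] = [set b; u'] |: G by rewrite /G setD1K // !inE eq_sym ne.
have E' : T :\ [set b; u'] = [set b; u] |: G by rewrite -{1}(setD1K buT) setU1D1.
by move: bridge bridge' ua u'a; rewrite E E' !linked_setU1; by_roots.
Qed.

Definition rotatable a b T u : bool :=
  [&& is_spanning_tree T, [set a; b] \in T & linked (T :\ [set a; b]) a u].

Definition rotate a b T u : graph := [set b; u] |: (T :\ [set a; b]).

Lemma in_rotate a b T u f : f != [set a; b] -> f != [set b; u] ->
  (f \in rotate a b T u) = (f \in T).
Proof. by move=> fab fbu; rewrite /rotate in_setU1 in_setD1 (negbTE fab) (negbTE fbu). Qed.

Lemma rotateP a b T u : rotatable a b T u ->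
  [/\ is_spanning_tree (rotate a b T u), [set b; u] \in rotate a b T u,
      linked (rotate a b T u :\ [set b; u]) u a &
      [set a; b] |: (rotate a b T u :\ [set b; u]) = T].
Proof.
case/and3P => treeT abT au.
have bridge := tree_bridge treeT abT (tree_edge_neq treeT abT).
have bu_new : [set b; u] \notin T :\ [set a; b].
  by apply/negP => /linked_edge; move: bridge au; by_roots.
have E : rotate a b T u :\ [set b; u] = T :\ [set a; b] by rewrite /rotate setU1K.
split; [|by rewrite setU11 | by rewrite E linked_sym | by rewrite E setD1K].
by rewrite /rotate set2C; apply: tree_exchange treeT abT au (connect0 _ _).
Qed.

Lemma rotate_onto a b T u : a != b -> is_spanning_tree T ->
  [set b; u] \in T -> linked (T :\ [set b; u]) u a ->
  rotatable a b ([set a; b] |: (T :\ [set b; u])) u /\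
  rotate a b ([set a; b] |: (T :\ [set b; u])) u = T.
Proof.
move=> nab treeT buT ua.
have bridge := tree_bridge treeT buT (tree_edge_neq treeT buT).
have ab_new : [set a; b] \notin T :\ [set b; u].
  by apply/negP => /linked_edge; move: bridge ua; by_roots.
have E : ([set a; b] |: (T :\ [set b; u])) :\ [set a; b] = T :\ [set b; u].
  by rewrite setU1K.
split; last by rewrite /rotate E setD1K.
apply/and3P; split; [|by rewrite setU11 | by rewrite E linked_sym].
have := tree_exchange (x := u) (y := b) (p := a) (q := b) treeT.
by rewrite set2C; apply => //; apply: connect0.
Qed.

Lemma sum_rotate a b (w : graph -> nat) : a != b ->
  \sum_(T : graph) \sum_(u : 'I_n) rotatable a b T u * w (rotate a b T u) =
  \sum_(T : graph) is_spanning_tree T * w T.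
Proof.
move=> nab; rewrite pair_bigA /= (bigID (fun tu => rotatable a b tu.1 tu.2)) /=.
rewrite [X in _ + X]big1 ?addn0 => [|tu /negbTE->] //.
under eq_bigr => tu -> do rewrite mul1n.
set S := [set tu : graph * 'I_n | rotatable a b tu.1 tu.2].
rewrite (eq_bigl [in S]) => [|tu]; last by rewrite inE.
rewrite -(big_imset (fun T => w T)) /=; last first.
  move=> [T u] [T' u']; rewrite !inE /= => rot rot' E.
  have [_ bu ua <-] := rotateP rot; have [tree' bu' u'a <-] := rotateP rot'.
  by rewrite E in bu ua *; rewrite (tree_first_edge_uniq tree' bu ua bu' u'a).
rewrite big_mkcond; apply: eq_bigr => T _.
have -> : (T \in [set rotate a b tu.1 tu.2 | tu in S]) = is_spanning_tree T.
  apply/imsetP/idP => [[[T' u]]|treeT]; first by rewrite inE => /rotateP[? _ _ _] ->.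
  have [u [buT ua]] := tree_first_edge treeT nab.
  have [rot E] := rotate_onto nab treeT buT ua.
  by exists ([set a; b] |: (T :\ [set b; u]), u); rewrite ?inE.
by case: is_spanning_tree; rewrite ?mul1n.
Qed.

End Trees.

Section Counting.
Variable n : nat.
Local Notation graph := {set {set 'I_n}}.
Implicit Types (T : graph) (e : {set 'I_n}) (a b c d u v x y z : 'I_n).

Definition ntrees := \sum_(T : graph) is_spanning_tree T.
Definition nedge e := \sum_(T : graph) is_spanning_tree T * (e \in T).
Definition nedge2 e e' := \sum_(T : graph) is_spanning_tree T * (e \in T) * (e' \in T).
Definition nside x y z := \sum_(T : graph)
  is_spanning_tree T * (([set x; y] \in T) && linked (T :\ [set x; y]) y z).

Definition rot_sum a b (h : graph -> nat) :=
  \sum_(T : graph) \sum_(u : 'I_n) rotatable a b T u * h T.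

Lemma ntrees_gt0 : 0 < n -> 0 < ntrees.
Proof.
move=> n_gt0; pose z := Ordinal n_gt0.
by rewrite /ntrees (bigD1 [set [set z; v] | v in [set v | v != z]]) //= star_tree.
Qed.

Lemma rot_sum_sides a b h : a != b ->
  rot_sum a b h + rot_sum b a h =
  n * \sum_(T : graph) is_spanning_tree T * ([set a; b] \in T) * h T.
Proof.
move=> nab; rewrite /rot_sum -big_split big_distrr; apply: eq_bigr => T _ /=.
rewrite -big_split /=; under eq_bigr do rewrite -mulnDl.
rewrite -big_distrl /= /rotatable (set2C b a).
case treeT: (is_spanning_tree T); last by rewrite big1 ?muln0.
case abT: ([set a; b] \in T); last by rewrite big1 ?muln0.
rewrite /= !mul1n (eq_bigr (fun => 1)) ?sum1_card ?card_ord // => v _.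
have := tree_sides v treeT abT; have := tree_bridge treeT abT nab.
by case: (boolP (linked _ a v)) => av; case: (boolP (linked _ b v)) => bv; by_roots.
Qed.

Lemma rot_sum_rotate a b h (w : graph -> nat) : a != b ->
  (forall T u, rotatable a b T u -> h T = w (rotate a b T u)) ->
  rot_sum a b h = \sum_(T : graph) is_spanning_tree T * w T.
Proof.
move=> nab hw; rewrite -(sum_rotate w nab); apply: eq_bigr => T _; apply: eq_bigr => u _.
by case rot: (rotatable a b T u); rewrite ?mul0n // (hw _ _ rot).
Qed.

Lemma rot_sum1 a b : a != b -> rot_sum a b (fun => 1) = ntrees.
Proof.
move=> nab; rewrite (rot_sum_rotate (w := fun => 1)) //.
by apply: eq_bigr => T _; rewrite muln1.
Qed.

Lemma nedge_count a b : a != b -> n * nedge [set a; b] = 2 * ntrees.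
Proof.
move=> nab; have := rot_sum_sides (fun => 1) nab.
rewrite rot_sum1 // rot_sum1 1?eq_sym //.
have -> : \sum_(T : graph) is_spanning_tree T * ([set a; b] \in T) * 1 = nedge [set a; b].
  by apply: eq_bigr => T _; rewrite muln1.
lia.
Qed.

Lemma rot_sum_edge a b e : a != b -> e != [set a; b] -> b \notin e ->
  rot_sum a b (fun T => e \in T) = nedge e.
Proof.
move=> nab eab be; apply: rot_sum_rotate => // T u _.
by rewrite in_rotate // set2_neq_notin.
Qed.

Lemma nedge2_disjoint a b c d : a != b -> c \notin [set a; b] -> d \notin [set a; b] ->
  n * nedge2 [set a; b] [set c; d] = 2 * nedge [set c; d].
Proof.
move=> nab cab dab.
have acd : a \notin [set c; d] by exact: notin_set2C cab dab.
have bcd : b \notin [set c; d] by rewrite set2C in cab dab; exact: notin_set2C cab dab.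
have cd_ab : [set c; d] != [set a; b] by exact: set2_neq_notin.
have cd_ba : [set c; d] != [set b; a] by exact: set2_neq_notin.
have := rot_sum_sides (fun T => [set c; d] \in T) nab.
have nba : b != a by rewrite eq_sym.
rewrite !rot_sum_edge //.
have -> : \sum_(T : graph) is_spanning_tree T * ([set a; b] \in T) * ([set c; d] \in T) =
  nedge2 [set a; b] [set c; d] by [].
lia.
Qed.

Lemma rot_sum_at a b c :
  \sum_(T : graph) \sum_(u : 'I_n) rotatable a b T u * (u == c) = nside b a c.
Proof.
apply: eq_bigr => T _; rewrite (bigD1 c) //= eqxx muln1 big1 ?addn0 => [|u /negbTE->];
  last by rewrite muln0.
by rewrite /rotatable (set2C b a) mulnb andbA.
Qed.

Lemma nside_swap a b c : a != b -> nside b a c = nside b c a.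
Proof.
move=> nab; rewrite -rot_sum_at /nside.
rewrite -(sum_rotate (fun T => ([set b; c] \in T) && linked (T :\ [set b; c]) c a) nab).
apply: eq_bigr => T _; apply: eq_bigr => u _.
case rot: (rotatable a b T u); rewrite ?mul0n // !mul1n; congr (nat_of_bool _).
have [treeR buR uaR _] := rotateP rot.
apply/eqP/idP => [<-|/andP[bcR caR]]; first by rewrite buR uaR.
exact: tree_first_edge_uniq treeR buR uaR bcR caR.
Qed.

Lemma nside_pair x y z : x != y -> nside x y z + nside y x z = nedge [set x; y].
Proof.
move=> nxy; rewrite /nside /nedge -big_split; apply: eq_bigr => T _ /=.
rewrite (set2C y x) -mulnDr.
case treeT: (is_spanning_tree T); rewrite ?mul0n // !mul1n.
case xyT: ([set x; y] \in T) => //=.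
have := tree_sides z treeT xyT; have := tree_bridge treeT xyT nxy.
by case: (boolP (linked _ x z)) => ?; case: (boolP (linked _ y z)) => ?; by_roots.
Qed.

Lemma rot_sum_adjacent a b c : a != b -> b != c -> a != c ->
  rot_sum a b (fun T => [set b; c] \in T) + nside b a c = nedge [set b; c].
Proof.
move=> nab nbc nac.
rewrite -rot_sum_at /rot_sum -big_split /nedge -(sum_rotate (fun T => [set b; c] \in T) nab).
apply: eq_bigr => T _; rewrite -big_split; apply: eq_bigr => u _ /=.
case rot: (rotatable a b T u); rewrite ?mul0n // !mul1n.
have bc_ab : [set b; c] != [set a; b].
  by rewrite (set2C a b); apply: contra_neq nac => /(set2_injr nbc) ->.
rewrite /rotate in_setU1 in_setD1 bc_ab /=.
have -> : ([set b; c] == [set b; u]) = (u == c).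
  by apply/eqP/eqP => [/(set2_injr nbc)|->].
have [uc|] := eqVneq u c; last by rewrite addn0.
case/and3P: rot => treeT abT au; subst u.
suff -> : ([set b; c] \in T) = false by [].
apply/negP => bcT; have := tree_bridge treeT abT nab.
have : linked (T :\ [set a; b]) b c by rewrite linked_edge // !inE bc_ab.
by move: au; by_roots.
Qed.

Lemma nedge2_adjacent a b c : a != b -> b != c -> a != c ->
  n * nedge2 [set a; b] [set b; c] + nside b a c = 2 * nedge [set b; c].
Proof.
move=> nab nbc nac.
have := rot_sum_sides (fun T => [set b; c] \in T) nab.
have abc : a \notin [set b; c] by apply/set2P => -[] E; rewrite E eqxx in nab nac.
have bc_ba : [set b; c] != [set b; a] by apply: contra_neq nac => /(set2_injr nbc).
have nba : b != a by rewrite eq_sym.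
rewrite (rot_sum_edge (b := a)) //.
have -> : \sum_(T : graph) is_spanning_tree T * ([set a; b] \in T) * ([set b; c] \in T) =
  nedge2 [set a; b] [set b; c] by [].
have := rot_sum_adjacent nab nbc nac; lia.
Qed.

Lemma nedge2_disjoint_count a b c d : a != b -> c != d ->
  c \notin [set a; b] -> d \notin [set a; b] ->
  n * n * nedge2 [set a; b] [set c; d] = 4 * ntrees.
Proof.
move=> nab ncd cab dab; have := nedge2_disjoint nab cab dab.
have := nedge_count ncd; nia.
Qed.

(* nside b a c = nside b c a, nside a b c = nside a c b and nside c a b = nside c b a,
   while the pairs sum to nedge = 2 * ntrees / n, so each value is ntrees / n. *)
Lemma nside_count a b c : a != b -> b != c -> a != c -> n * nside b a c = ntrees.
Proof.
move=> nab nbc nac; have nba : b != a by rewrite eq_sym.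
have := nside_swap c nab; have := nside_swap c nba; have := nside_swap b nac.
have := nside_pair c nab; have := nside_pair b nac; have := nside_pair a nbc.
have := nedge_count nab; have := nedge_count nac; have := nedge_count nbc.
nia.
Qed.

Lemma nedge2_adjacent_count a b c : a != b -> b != c -> a != c ->
  n * n * nedge2 [set a; b] [set b; c] = 3 * ntrees.
Proof.
move=> nab nbc nac; have := nedge2_adjacent nab nbc nac.
have := nside_count nab nbc nac; have := nedge_count nbc; nia.
Qed.

End Counting.

Local Open Scope ring_scope.

Lemma prod_pair (V : comPzSemiRingType) (I : finType) (G : I -> V) i j : i != j ->
  (forall l, l != i -> l != j -> G l = 1) -> \prod_l G l = G i * G j.
Proof.
move=> nij G1; rewrite (bigD1 i) //= (bigD1 j) 1?eq_sym //= big1 ?mulr1 //.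
by move=> l /andP[li lj]; apply: G1.
Qed.

Lemma natr_div_eq (F : numFieldType) (a b c d : nat) :
  (0 < b)%N -> (0 < d)%N -> (a * d = c * b)%N -> a%:R / b%:R = c%:R / d%:R :> F.
Proof.
by move=> b_gt0 d_gt0 E; apply/eqP; rewrite eqr_div ?pnatr_eq0 -?lt0n // -!natrM E.
Qed.

Section Expectation.
Variables (R : realFieldType) (n : nat).
Local Notation graph := {set {set 'I_n}}.
Implicit Types (k : nat).

Definition trees : {set graph} := [set T | is_spanning_tree T].

Definition Expect1 (g : graph -> R) : R := (\sum_(T in trees) g T) / (ntrees n)%:R.

Lemma card_trees : #|trees| = ntrees n.
Proof.
rewrite /ntrees -sum1_card big_mkcond /=; apply: eq_bigr => T _.
by rewrite inE; case: is_spanning_tree.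
Qed.

Lemma sum_tree_tuples_prod k (g : 'I_k -> graph -> R) :
  \sum_(T in tree_tuples n k) \prod_i g i (T i) = \prod_i \sum_(T in trees) g i T.
Proof.
rewrite bigA_distr_big; apply: eq_bigl => T.
by rewrite inE; apply/forallP/ffun_onP => treeT i; move: (treeT i); rewrite inE.
Qed.

Lemma card_tree_tuples k : #|tree_tuples n k|%:R = (ntrees n)%:R ^+ k :> R.
Proof.
have := sum_tree_tuples_prod (fun (_ : 'I_k) _ => 1 : R).
rewrite [X in X = _ -> _](eq_bigr (fun => 1)) => [|T _]; last by rewrite prodr_const expr1n.
by rewrite !sumr_const prodr_const card_ord card_trees => ->.
Qed.

Lemma Expect_prod k (g : 'I_k -> graph -> R) :
  Expect (fun T : {ffun 'I_k -> graph} => \prod_i g i (T i)) = \prod_i Expect1 (g i).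
Proof.
by rewrite /Expect card_tree_tuples sum_tree_tuples_prod prodf_div prodr_const card_ord.
Qed.

Lemma eq_Expect k (f g : {ffun 'I_k -> graph} -> R) : f =1 g -> Expect f = Expect g.
Proof. by move=> fg; rewrite /Expect (eq_bigr _ (fun T _ => fg T)). Qed.

Lemma ExpectD k (f g : {ffun 'I_k -> graph} -> R) :
  Expect (fun T => f T + g T) = Expect f + Expect g.
Proof. by rewrite /Expect big_split mulrDl. Qed.

Lemma ExpectB k (f g : {ffun 'I_k -> graph} -> R) :
  Expect (fun T => f T - g T) = Expect f - Expect g.
Proof. by rewrite /Expect sumrB mulrBl. Qed.

Lemma Expect_sum k (f : 'I_k -> {ffun 'I_k -> graph} -> R) :
  Expect (fun T => \sum_i f i T) = \sum_i Expect (f i).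
Proof. by rewrite /Expect exchange_big mulr_suml. Qed.

Lemma eq_Expect1 (f g : graph -> R) : f =1 g -> Expect1 f = Expect1 g.
Proof. by move=> fg; rewrite /Expect1 (eq_bigr _ (fun T _ => fg T)). Qed.

Lemma Expect1D (f g : graph -> R) : Expect1 (fun T => f T + g T) = Expect1 f + Expect1 g.
Proof. by rewrite /Expect1 big_split mulrDl. Qed.

Lemma Expect1B (f g : graph -> R) : Expect1 (fun T => f T - g T) = Expect1 f - Expect1 g.
Proof. by rewrite /Expect1 sumrB mulrBl. Qed.

Lemma Expect_coord_prod k (i : 'I_k) (h0 h1 : graph -> R) (F : {ffun 'I_k -> graph} -> R) :
  (forall T, F T = h1 (T i) * \prod_(l | l != i) h0 (T l)) ->
  Expect F = Expect1 h1 * Expect1 h0 ^+ k.-1.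
Proof.
move=> FE; pose g l := if l == i then h1 else h0.
rewrite (eq_Expect (g := fun T => \prod_l g l (T l))) => [|T]; last first.
  rewrite FE [RHS](bigD1 i) //= /g eqxx; congr (_ * _).
  by apply: eq_bigr => l /negbTE ->.
rewrite Expect_prod (bigD1 i) //= /g eqxx; congr (_ * _).
rewrite (eq_bigr (fun => Expect1 h0)) => [|l /negbTE -> //].
by rewrite prodr_const cardC1 card_ord.
Qed.

Lemma Expect_iid_prod k (h : graph -> R) (F : {ffun 'I_k -> graph} -> R) :
  (forall T, F T = \prod_l h (T l)) -> Expect F = Expect1 h ^+ k.
Proof.
move=> FE; pose g (l : 'I_k) := h.
rewrite (eq_Expect (g := fun T => \prod_l g l (T l))) // Expect_prod.
by rewrite (eq_bigr (fun => Expect1 h)) // prodr_const card_ord.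
Qed.

Hypothesis n_gt0 : (0 < n)%N.

Lemma ntrees_neq0 : (ntrees n)%:R != 0 :> R.
Proof. by rewrite pnatr_eq0 -lt0n ntrees_gt0. Qed.

Lemma Expect1_cst (c : R) : Expect1 (fun => c) = c.
Proof. by rewrite /Expect1 sumr_const card_trees -[c *+ _]mulr_natr mulfK ?ntrees_neq0. Qed.

Lemma Expect_cst k (c : R) : Expect (fun _ : {ffun 'I_k -> graph} => c) = c.
Proof.
by rewrite /Expect sumr_const -[c *+ _]mulr_natr card_tree_tuples mulfK ?expf_neq0 ?ntrees_neq0.
Qed.

Lemma Expect_coord k (i : 'I_k) (h : graph -> R) (F : {ffun 'I_k -> graph} -> R) :
  (forall T, F T = h (T i)) -> Expect F = Expect1 h.
Proof.
move=> FE; rewrite (Expect_coord_prod (i := i) (h0 := fun => 1) (h1 := h)).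
  by rewrite Expect1_cst expr1n mulr1.
by move=> T; rewrite FE big1 ?mulr1.
Qed.

Lemma Expect_pair k (i j : 'I_k) (h h' : graph -> R) (F : {ffun 'I_k -> graph} -> R) :
  i != j -> (forall T, F T = h (T i) * h' (T j)) -> Expect F = Expect1 h * Expect1 h'.
Proof.
move=> nij FE; pose g l := if l == i then h else if l == j then h' else fun => 1.
have gi : g i = h by rewrite /g eqxx.
have gj : g j = h' by rewrite /g eq_sym (negbTE nij) eqxx.
have g1 l : l != i -> l != j -> g l = fun => 1 by move=> /negbTE li /negbTE lj; rewrite /g li lj.
rewrite (eq_Expect (g := fun T => \prod_l g l (T l))) => [|T]; last first.
  by rewrite FE (prod_pair (G := fun l => g l (T l)) nij) ?gi ?gj // => l li lj; rewrite g1.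
rewrite Expect_prod (prod_pair (G := fun l => Expect1 (g l)) nij) ?gi ?gj // => l li lj.
by rewrite g1 ?Expect1_cst.
Qed.

Definition xind (e : {set 'I_n}) (T : graph) : R := (e \in T)%:R.
Definition occ k (e : {set 'I_n}) (T : {ffun 'I_k -> graph}) : R := \sum_i xind e (T i).
Definition absent k (e : {set 'I_n}) (T : {ffun 'I_k -> graph}) : R := \prod_i (1 - xind e (T i)).

Lemma Rr_occ_absent k e (T : {ffun 'I_k -> graph}) : (0 < k)%N ->
  Rr R e T = occ e T - 1 + absent e T.
Proof.
move=> k_gt0; rewrite /Rr /Rsurplus.
have max_le : (\max_(i < k) Xind e T i <= \sum_(i < k) Xind e T i)%N.
  by apply/bigmax_leqP => i _; rewrite (bigD1 i) //= leq_addr.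
rewrite natrB // natr_sum; case: (boolP [exists i, e \in T i]) => [/existsP[i eTi]|/existsPn eT].
- have -> : (\max_(i < k) Xind e T i)%N = 1%N.
    apply/eqP; rewrite eqn_leq; apply/andP; split.
      by apply/bigmax_leqP => j _; rewrite /Xind leq_b1.
    by apply: leq_trans (leq_bigmax i); rewrite /Xind eTi.
  by rewrite /absent [\prod_i _](bigD1 i) //= /xind eTi subrr mul0r addr0.
- have -> : (\max_(i < k) Xind e T i)%N = 0%N.
    by apply/eqP; rewrite -leqn0; apply/bigmax_leqP => j _; rewrite /Xind (negbTE (eT j)).
  rewrite /absent [\prod_i _]big1 ?subr0 ?subrK // => j _.
  by rewrite /xind (negbTE (eT j)) subr0.
Qed.

Section Moments.
Variables (k : nat) (e e' : {set 'I_n}) (p p' q : R).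
Hypotheses (Ee : Expect1 (xind e) = p) (Ee' : Expect1 (xind e') = p')
  (Eee' : Expect1 (fun T => xind e T * xind e' T) = q).

Lemma Expect_occ : Expect (@occ k e) = p *+ k.
Proof.
rewrite /occ Expect_sum (eq_bigr (fun => p)) ?sumr_const ?card_ord // => i _.
by rewrite -Ee; apply: (Expect_coord (i := i)).
Qed.

Lemma Expect_absent : Expect (@absent k e) = (1 - p) ^+ k.
Proof.
by rewrite (Expect_iid_prod (h := fun T => 1 - xind e T)) // Expect1B Expect1_cst Ee.
Qed.

Lemma Expect_occ2 :
  Expect (fun T : {ffun 'I_k -> graph} => occ e T * occ e' T) = (q + (p * p') *+ k.-1) *+ k.
Proof.
rewrite (eq_Expect (g := fun T => \sum_i \sum_j xind e (T i) * xind e' (T j))) => [|T];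
  last by rewrite /occ mulr_suml; apply: eq_bigr => i _; rewrite mulr_sumr.
rewrite Expect_sum (eq_bigr (fun => q + (p * p') *+ k.-1)) ?sumr_const ?card_ord // => i _.
rewrite Expect_sum (bigD1 i) //= (Expect_coord (i := i) (h := fun T => xind e T * xind e' T)) //.
rewrite Eee' (eq_bigr (fun => p * p')) => [|j ji]; last first.
  by rewrite (Expect_pair (i := i) (j := j) (h := xind e) (h' := xind e')) 1?eq_sym ?Ee ?Ee'.
by rewrite (sumr_const (predC1 i)) cardC1 card_ord.
Qed.

Lemma Expect_occ_absent :
  Expect (fun T : {ffun 'I_k -> graph} => occ e T * absent e' T) =
  ((p - q) * (1 - p') ^+ k.-1) *+ k.
Proof.
rewrite (eq_Expect (g := fun T => \sum_i (xind e (T i) * (1 - xind e' (T i))) *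
                                     \prod_(l | l != i) (1 - xind e' (T l)))) => [|T];
  last by rewrite /occ /absent mulr_suml; apply: eq_bigr => i _; rewrite (bigD1 i) //= mulrA.
rewrite Expect_sum (eq_bigr (fun => (p - q) * (1 - p') ^+ k.-1)) ?sumr_const ?card_ord // => i _.
rewrite (Expect_coord_prod (i := i) (h0 := fun T => 1 - xind e' T)
                           (h1 := fun T => xind e T * (1 - xind e' T))) //.
rewrite Expect1B Expect1_cst Ee' (eq_Expect1 (g := fun T => xind e T - xind e T * xind e' T)).
  by rewrite Expect1B Ee Eee'.
by move=> T; rewrite mulrBr mulr1.
Qed.

Lemma Expect_absent2 :
  Expect (fun T : {ffun 'I_k -> graph} => absent e T * absent e' T) = (1 - p - p' + q) ^+ k.
Proof.
rewrite (Expect_iid_prod (h := fun T => (1 - xind e T) * (1 - xind e' T))) => [|T];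
  last by rewrite /absent -big_split.
rewrite (eq_Expect1 (g := fun T => 1 - xind e T - xind e' T + xind e T * xind e' T)) => [|T];
  last by ring.
by rewrite Expect1D !Expect1B Expect1_cst Ee Ee' Eee'.
Qed.

End Moments.

End Expectation.

Arguments xind {R n} e T.
Arguments occ {R n k} e T.
Arguments absent {R n k} e T.

Section Covariance.
Variables (R : realFieldType) (n : nat).
Hypothesis n_gt0 : (0 < n)%N.
Local Notation graph := {set {set 'I_n}}.
Local Notation Expect1 := (@Expect1 R n).

Lemma Cov_Rr k (e e' : {set 'I_n}) p q : (0 < k)%N ->
  Expect1 (xind e) = p -> Expect1 (xind e') = p ->
  Expect1 (fun T => xind e T * xind e' T) = q ->
  Cov (@Rr R n k e) (@Rr R n k e') =
  k%:R * (q - p ^+ 2) + 2 * k%:R * (1 - p) ^+ k.-1 * (p ^+ 2 - q)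
  + (1 - 2 * p + q) ^+ k - (1 - p) ^+ (2 * k).
Proof.
move=> k_gt0 Ee Ee' Eee'.
have Ee'e : Expect1 (fun T => xind e' T * xind e T) = q.
  by rewrite -Eee'; apply: eq_Expect1 => T; rewrite mulrC.
have ERr f : Expect (@Rr R n k f) = Expect (@occ R n k f) - 1 + Expect (@absent R n k f).
  rewrite (eq_Expect (g := fun T => occ f T - 1 + absent f T)) => [|T]; last exact: Rr_occ_absent.
  by rewrite ExpectD ExpectB (Expect_cst n_gt0 k).
rewrite /Cov !ERr (eq_Expect (g := fun T =>
  occ e T * occ e' T + occ e T * absent e' T + occ e' T * absent e T + absent e T * absent e' T
  - occ e T - occ e' T - absent e T - absent e' T + 1)) => [|T]; last first.
  by rewrite !Rr_occ_absent //; ring.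
rewrite ExpectD !ExpectB !ExpectD (Expect_cst n_gt0 k).
rewrite (Expect_occ2 n_gt0 k Ee Ee' Eee') (Expect_occ_absent n_gt0 k Ee Ee' Eee').
rewrite (Expect_occ_absent n_gt0 k Ee' Ee Ee'e) (Expect_absent2 n_gt0 k Ee Ee' Eee').
rewrite (Expect_occ n_gt0 k Ee) (Expect_occ n_gt0 k Ee').
rewrite (Expect_absent n_gt0 k Ee) (Expect_absent n_gt0 k Ee').
have -> : 1 - p - p + q = 1 - 2 * p + q by ring.
case: k k_gt0 {ERr} => // m _.
by rewrite /= mul2n -addnn exprD !exprS; ring.
Qed.

Lemma Expect1_count (f : graph -> nat) :
  Expect1 (fun T => (f T)%:R) =
  (\sum_(T : graph) is_spanning_tree T * f T)%:R / (ntrees n)%:R.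
Proof.
rewrite /Expect1 big_mkcond /=; congr (_ / _); rewrite natr_sum; apply: eq_bigr => T _.
by rewrite inE; case: is_spanning_tree; rewrite ?mul1n ?mul0n.
Qed.

Lemma Expect1_edge (e : {set 'I_n}) : #|e| = 2 -> Expect1 (xind e) = 2 / n%:R.
Proof.
move/eqP/cards2P => [a [b [nab ->]]].
rewrite (Expect1_count (fun T => [set a; b] \in T)).
by apply: natr_div_eq; rewrite ?ntrees_gt0 // mulnC; apply: nedge_count.
Qed.

Lemma Expect1_edge_pair (e e' : {set 'I_n}) c : (n * n * nedge2 e e' = c * ntrees n)%N ->
  Expect1 (fun T => xind e T * xind e' T) = c%:R / n%:R ^+ 2.
Proof.
move=> count; rewrite (eq_Expect1 (g := fun T => ((e \in T) * (e' \in T))%N%:R)) => [|T];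
  last by rewrite natrM.
rewrite Expect1_count -natrX; apply: natr_div_eq; rewrite ?expn_gt0 ?n_gt0 ?ntrees_gt0 //.
by rewrite -count mulnC; congr (_ * _); apply: eq_bigr => T _; rewrite mulnA.
Qed.

Lemma Expect1_disjoint_edges (e e' : {set 'I_n}) : #|e| = 2 -> #|e'| = 2 ->
  [disjoint e & e'] -> Expect1 (fun T => xind e T * xind e' T) = (2 / n%:R) ^+ 2.
Proof.
move=> /eqP/cards2P[a [b [nab ->]]] /eqP/cards2P[c [d [ncd ->]]] dis.
have cab := negbT (disjointFl dis (set21 c d)).
have dab := negbT (disjointFl dis (set22 c d)).
rewrite (Expect1_edge_pair (c := 4)); last exact: nedge2_disjoint_count.
by rewrite expr_div_n; congr (_ / _); ring.
Qed.

Lemma Expect1_adjacent_edges (e e' : {set 'I_n}) : #|e| = 2 -> #|e'| = 2 -> e != e' ->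
  ~~ [disjoint e & e'] -> Expect1 (fun T => xind e T * xind e' T) = 3 / n%:R ^+ 2.
Proof.
move=> ce ce' nee; rewrite -setI_eq0 => /set0Pn[v /setIP[ve ve']].
have [a nav Ee] := set2_of_mem ce ve; have [c ncv Ee'] := set2_of_mem ce' ve'.
have nac : a != c by apply: contraNneq nee => ac; rewrite Ee Ee' ac.
rewrite Ee Ee' (set2C c v) (Expect1_edge_pair (c := 3)) //.
by rewrite nedge2_adjacent_count // eq_sym.
Qed.

End Covariance.

Theorem mainTheorem10 (R : realFieldType) (n k : nat) (e e' : {set 'I_n}) :
  (3 <= n)%N -> (1 <= k)%N ->
  #|e| = 2%N -> #|e'| = 2%N -> e != e' ->
  ([disjoint e & e'] ->
     Cov (@Rr R n k e) (@Rr R n k e') = 0) /\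
  (~~ [disjoint e & e'] ->
     Cov (@Rr R n k e) (@Rr R n k e') =
       - (k%:R / n%:R ^+ 2)
       + (2 * k%:R / n%:R ^+ 2) * (1 - 2 / n%:R) ^+ k.-1
       + (1 - 4 / n%:R + 3 / n%:R ^+ 2) ^+ k
       - (1 - 2 / n%:R) ^+ (2 * k)).
Proof.
move=> n_ge3 k_gt0 ce ce' nee.
have n_gt0 : (0 < n)%N by apply: leq_trans n_ge3.
have Ee := Expect1_edge R n_gt0 ce; have Ee' := Expect1_edge R n_gt0 ce'.
split => [dis | ndis].
- rewrite (Cov_Rr n_gt0 k_gt0 Ee Ee' (Expect1_disjoint_edges R n_gt0 ce ce' dis)).
  have -> : 1 - 2 * (2 / n%:R) + (2 / n%:R) ^+ 2 = (1 - 2 / n%:R) ^+ 2 :> R by ring.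
  by rewrite -exprM; ring.
- rewrite (Cov_Rr n_gt0 k_gt0 Ee Ee' (Expect1_adjacent_edges R n_gt0 ce ce' nee ndis)).
  have -> : 1 - 2 * (2 / n%:R) + 3 / n%:R ^+ 2 = 1 - 4 / n%:R + 3 / n%:R ^+ 2 :> R by ring.
  by field; rewrite pnatr_eq0 -lt0n.
Qed.
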